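(* Let $G=(V,E,\omega)$ be a graph with $V=\{v_1,\dots,v_n\}$, and let $S=\{v_{i_1},\dots,v_{i_p}\}$ (with $i_1<\dots<i_p$) be a structural set of $G$. Then $\mathcal{R}_S(G)$ is the graph whose weighted adjacency matrix (with vertices ordered $v_{i_1},\dots,v_{i_p}$) is $r\big(M(G)-\lambda I;\{i_1,\dots,i_p\}\big)+\lambda I$.
   Context: $\mathbb{W}$ is the field of rational functions in a complex variable $\lambda$ with complex coefficients. A graph $G=(V,E,\omega)$ is a finite directed graph with vertex set $V=\{v_1,\dots,v_n\}$, edges $E$ (loops allowed, at most one edge $e_{ij}$ from $v_i$ to $v_j$), weights $\omega:E\to\mathbb{W}\setminus\{0\}$, $\omega(e_{ij})=0$ for non-edges; $M(G)_{ij}=\omega(e_{ij})$. $\bar S=V\setminus S$; $\ell(G)$ is $G$ without loops; $G|_U$ is an induced subgraph. A path is a sequence of distinct vertices $u_1,\dots,u_m$ ($m\ge2$) with edges $u_k\to u_{k+1}$; a cycle is the same with $u_1=u_m$, $u_1,\dots,u_{m-1}$ distinct; $u_2,\dots,u_{m-1}$ are interior. A nonempty $S\subseteq V$ is a structural set if $\ell(G)|_{\bar S}$ has no cycles and $\omega(e_{ii})\ne\lambda$ for $v_i\in\bar S$. For $v_i,v_j\in S$, $\mathcal{B}_{ij}(G;S)$ is the set of paths or cycles from $v_i$ to $v_j$ with no interior vertex in $S$; $\mathcal{P}_\omega(u_1,\dots,u_m)=\omega(u_1u_2)\prod_{k=2}^{m-1}\frac{\omega(u_ku_{k+1})}{\lambda-\omega(u_ku_k)}$;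 $\mathcal{R}_S(G)$ is the graph on $S$ with an edge $v_i\to v_j$ iff $\mathcal{B}_{ij}(G;S)\ne\emptyset$, of weight $\sum_{\beta\in\mathcal{B}_{ij}(G;S)}\mathcal{P}_\omega(\beta)$. Matrix reduction: for $N\in\mathbb{W}^{n\times n}$ and nonempty $\mathcal{I}\subseteq\{1,\dots,n\}$ with complement $\bar{\mathcal{I}}$, let $A$ ($D$) be the principal submatrix indexed by $\bar{\mathcal{I}}$ ($\mathcal{I}$), $B$ the submatrix with rows $\bar{\mathcal{I}}$, columns $\mathcal{I}$, $C$ the submatrix with rows $\mathcal{I}$, columns $\bar{\mathcal{I}}$ (indices in increasing order); if $A$ is invertible, $r(N;\mathcal{I})=D-CA^{-1}B$ (and $r(N;\{1,\dots,n\})=N$). *)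

From HB Require Import structures.
From mathcomp Require Import all_boot all_order all_algebra.
From mathcomp Require Import fraction complex reals.
Set Implicit Arguments. Unset Strict Implicit. Unset Printing Implicit Defensive.
Import Order.TTheory GRing.Theory Num.Theory.
Local Open Scope ring_scope.

(* The field W = C(lambda) of rational functions in lambda with complex
   coefficients; C is modelled as complex R for R a real type (the reals). *)
Definition W (R : realType) := {fraction {poly R[i]}}.

Definition lam (R : realType) : W R := tofrac ('X : {poly R[i]}).

(* the a-th element (in increasing order) of a set S of indices:
   enum S lists S in increasing order *)
Definition sidx (n : nat) (S : {set 'I_n}) (a : 'I_#|S|) : 'I_n := enum_val a.

Section Graphs.
Variables (R : realType) (n : nat).
Implicit Types (M : 'M[W R]_n) (S : {set 'I_n}) (s : seq 'I_n).

(* A graph G on vertices v_1..v_n (ordinals 'I_n) is represented by its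
   weighted adjacency matrix M = M(G): there is an edge v_i -> v_j iff
   M i j != 0, and then its weight is M i j. *)
Definition edge M : rel 'I_n := fun a b => M a b != 0.
Definition edge_noloop M : rel 'I_n := fun a b => (a != b) && (M a b != 0).

Definition is_gpath (e : rel 'I_n) s :=
  match s with
  | [::] => false
  | x :: t => [&& (1 <= size t)%N, uniq s & path e x t]
  end.

Definition is_gcycle (e : rel 'I_n) s :=
  match s with
  | [::] => false
  | x :: t => [&& (1 <= size t)%N, last x t == x, uniq (belast x t) & path e x t]
  end.

Definition interior s : seq 'I_n :=
  match s with
  | [::] => [::]
  | x :: t => behead (belast x t)
  end.

Definition structural M S :=
  [/\ S != set0,
      (forall s, all (fun v => v \notin S) s -> ~~ is_gcycle (edge_noloop M) s)
    & forall i, i \notin S -> M i i != lam R].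

Definition inB M S (i j : 'I_n) s :=
  [&& is_gpath (edge M) s || is_gcycle (edge M) s,
      head i s == i, last i s == j &
      all (fun v => v \notin S) (interior s)].

Definition Pw M s : W R :=
  match s with
  | x :: y :: t =>
      M x y * \prod_(k < size t)
        (M (nth x (y :: t) k) (nth x (y :: t) k.+1) /
         (lam R - M (nth x (y :: t) k) (nth x (y :: t) k)))
  | _ => 0
  end.

(* Every element of B_ij(G;S) has at most n+1 vertices, so B_ij(G;S) is
   exactly the set of k-tuples (k < n+2) satisfying inB. *)
Definition Bnonempty M S i j :=
  [exists k : 'I_n.+2, exists t : k.-tuple 'I_n, inB M S i j t].

Definition Bsum M S i j : W R :=
  \sum_(k < n.+2) \sum_(t : k.-tuple 'I_n | inB M S i j t) Pw M t.

Definition RS M S : 'M[W R]_#|S| :=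
  \matrix_(a, b) (if Bnonempty M S (sidx a) (sidx b)
                  then Bsum M S (sidx a) (sidx b) else 0).

End Graphs.


(* Matrix reduction r(N; I), the index set I being given as a set of
   ordinals; entries of the blocks are taken in increasing index order. *)
Section Reduction.
Variables (F : fieldType) (n : nat) (N : 'M[F]_n) (I : {set 'I_n}).
Definition redA : 'M[F]_#|~: I| := \matrix_(a, b) N (sidx a) (sidx b).
Definition redB : 'M[F]_(#|~: I|, #|I|) := \matrix_(a, b) N (sidx a) (sidx b).
Definition redC : 'M[F]_(#|I|, #|~: I|) := \matrix_(a, b) N (sidx a) (sidx b).
Definition redD : 'M[F]_#|I| := \matrix_(a, b) N (sidx a) (sidx b).
(* r(N; I) = D - C A^{-1} B (meaningful when A is invertible; when
   I is everything, A is the empty matrix and r(N; I) = D = N) *)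
Definition mxreduce : 'M[F]_#|I| := redD - redC *m invmx redA *m redB.
End Reduction.

From HB Require Import structures.
From mathcomp Require Import all_boot all_order all_algebra.
From mathcomp Require Import fraction complex reals.
Import Order.TTheory GRing.Theory Num.Theory.
Local Open Scope ring_scope.
Set Implicit Arguments. Unset Strict Implicit. Unset Printing Implicit Defensive.

(* Put F_uv = omega(e_uv) / (lambda - omega(e_uu)) for u outside S and u <> v,
   and F_uv = 0 otherwise.  Each step of a walk of nonzero F-weight leaves a
   vertex of S-bar along an edge of l(G); as l(G) has no cycle in S-bar, the
   vertices of such a walk before the last one are distinct and outside S.
   Hence F is nilpotent and G = sum_(k < n) F^k is the inverse of 1 - F.
   For v_i, v_j in S the elements of B_ij(G;S) with m interior vertices are
   exactly the walks v_i -> u_2 -> ... -> v_j contributing to (M F^m)_ij, with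
   P_omega as their weight, so the weights of R_S(G) are the entries of M G
   on S x S.  Writing E for the diagonal matrix of the (lambda - omega(e_vv))^-1,
   v outside S (and 0 on S), one has E (M - lambda I) = F - 1 + I_S; hence
   -(G E) restricted to S-bar inverts the block A, and D - C A^-1 B + lambda I
   is the S x S block of M G. *)

Lemma big_tuple_nil (V : zmodType) (T : finType) (f : 0.-tuple T -> V) :
  \sum_(t : 0.-tuple T) f t = f [tuple].
Proof. by rewrite (big_pred1 [tuple]) // => t; rewrite /= tuple0; apply/eqP. Qed.

Lemma big_tuple_cons (V : zmodType) (T : finType) k (f : k.+1.-tuple T -> V) :
  \sum_(t : k.+1.-tuple T) f t =
  \sum_(x : T) \sum_(t : k.-tuple T) f [tuple of x :: t].
Proof.
rewrite pair_big (reindex (fun p : T * k.-tuple T => [tuple of p.1 :: p.2])) //=.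
exists (fun t => (thead t, behead_tuple t)) => [[x t] _|t _] /=.
  by rewrite theadE; congr pair; apply: val_inj.
by rewrite [RHS]tuple_eta.
Qed.

Section Walks.
Variables (V : comPzRingType) (T : Type) (F : T -> T -> V).

Fixpoint walk_weight (u : T) (t : seq T) : V :=
  if t is v :: t' then F u v * walk_weight v t' else 1.

Lemma walk_weight_nth x u t :
  \prod_(k < size t) F (nth x (u :: t) k) (nth x (u :: t) k.+1) =
  walk_weight u t.
Proof.
elim: t u => [|v t IH] u /=; first by rewrite big_ord0.
by rewrite big_ord_recl -IH.
Qed.

Lemma walk_weight_neq0_path u t :
  walk_weight u t != 0 -> path (fun a b => F a b != 0) u t.
Proof.
elim: t u => [//|v t IH] u /= nz_uvt; apply/andP; split.
  by apply: contraNneq nz_uvt => ->; rewrite mul0r.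
by apply: IH; apply: contraNneq nz_uvt => ->; rewrite mulr0.
Qed.

End Walks.

Lemma exp_mxE (V : comPzRingType) n (F : 'M[V]_n) m u v :
  (F ^+ m) u v =
  \sum_(t : m.-tuple 'I_n) (last u t == v)%:R * walk_weight F u t.
Proof.
elim: m u => [|m IH] u; first by rewrite expr0 big_tuple_nil /= mulr1 mxE.
rewrite exprS -mulmxE mxE big_tuple_cons; apply: eq_bigr => w _.
by rewrite IH mulr_sumr; apply: eq_bigr => t _ /=; rewrite mulrCA.
Qed.

Lemma path_source (T : Type) (P : pred T) x s :
  path (fun a _ => P a) x s = all P (belast x s).
Proof. by elim: s x => //= y s IH x; rewrite IH. Qed.

Section Acyclic.
Variables (n : nat) (e : rel 'I_n) (P : pred 'I_n).
Hypothesis acyclic : forall s, all P s -> ~~ is_gcycle e s.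

Lemma acyclic_path_uniq x s : all P (x :: s) -> path e x s -> uniq (x :: s).
Proof.
elim: s x => [//|y s IH] x allP_xys e_xys.
have uniq_ys : uniq (y :: s).
  by apply: IH; [case/andP: allP_xys | case/andP: e_xys].
rewrite cons_uniq uniq_ys andbT; apply/negP => /splitPr def_ys.
move: def_ys uniq_ys allP_xys e_xys => [p1 p2].
rewrite cat_uniq /= negb_or => /and3P[uniq_p1 /andP[x_notin_p1 _] _].
rewrite /= all_cat cat_path => /and3P[Px allP_p1 _] /andP[e_p1 /andP[e_x _]].
have allP_cycle : all P (x :: rcons p1 x) by rewrite /= all_rcons Px allP_p1.
have : is_gcycle e (x :: rcons p1 x).
  rewrite /= size_rcons last_rcons belast_rcons rcons_path e_p1 e_x eqxx /=.
  by rewrite x_notin_p1 uniq_p1.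
by move/negP: (acyclic allP_cycle).
Qed.

End Acyclic.

Lemma big_sidx (V : nmodType) n (A : {set 'I_n}) (F : 'I_n -> V) :
  \sum_(c < #|A|) F (sidx c) = \sum_(w in A) F w.
Proof. by rewrite [RHS]big_enum_val. Qed.

Lemma sidx_eq n (A : {set 'I_n}) (a b : 'I_#|A|) : (sidx a == sidx b) = (a == b).
Proof. by rewrite /sidx (inj_eq enum_val_inj). Qed.

Lemma sidx_compl n (A : {set 'I_n}) (a : 'I_#|~: A|) : sidx a \notin A.
Proof. by have := enum_valP a; rewrite inE. Qed.

Lemma mulmx_mxsub_sidx (V : pzRingType) m p k l n (A : {set 'I_n})
    (f : 'I_m -> 'I_k) (g : 'I_p -> 'I_l) (P : 'M[V]_(k, n)) (Q : 'M[V]_(n, l)) :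
  (forall i j w, w \notin A -> P (f i) w * Q w (g j) = 0) ->
  mxsub f (@sidx n A) P *m mxsub (@sidx n A) g Q = mxsub f g (P *m Q).
Proof.
move=> PQ_out0; apply/matrixP => i j; rewrite !mxE.
under eq_bigr do rewrite !mxE.
rewrite (big_sidx A (fun w => P (f i) w * Q w (g j))) [RHS](bigID (mem A)) /=.
by rewrite [X in _ + X]big1 ?addr0 // => w; apply: PQ_out0.
Qed.

Lemma inB_size_gt1 (R : realType) n (M : 'M[W R]_n) S i j s :
  inB M S i j s -> (1 < size s)%N.
Proof. by case/and4P=> /orP[]; case: s => [|x [|y s]]. Qed.

Lemma inB_uniq_tail (R : realType) n (M : 'M[W R]_n) S i j w t :
  inB M S i j (i :: w :: t) -> uniq (w :: t).
Proof.
case/and4P=> /orP[/and3P[_ /andP[_ u_wt] _] //|] + _ _ _.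
case/and4P=> _ /eqP /= last_wt u_ibel _.
suff : uniq (w :: t) by [].
by rewrite lastI last_wt rcons_uniq.
Qed.

Lemma RSE (R : realType) n (M : 'M[W R]_n) S a b :
  RS M S a b = Bsum M S (sidx a) (sidx b).
Proof.
rewrite mxE; case: ifPn => // /existsPn empty_B.
apply/esym/big1 => k _; apply: big1 => t B_t.
by have /existsPn/(_ t) := empty_B k; rewrite B_t.
Qed.

Section Reduction.
Variables (R : realType) (n : nat) (M : 'M[W R]_n) (S : {set 'I_n}).
Hypothesis S_neq0 : S != set0.
Hypothesis acyclic_off_S :
  forall s, all (fun v => v \notin S) s -> ~~ is_gcycle (edge_noloop M) s.
Hypothesis diag_neq_lam : forall u, u \notin S -> M u u != lam R.

Local Notation lm := (lam R).
Local Notation N := (M - lm%:M).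

Lemma lam_sub_diag_neq0 u : u \notin S -> lm - M u u != 0.
Proof. by move=> uS; rewrite subr_eq0 eq_sym diag_neq_lam. Qed.

Lemma card_compl_lt : (#|~: S| < n)%N.
Proof.
rewrite -[in X in (_ < X)%N](card_ord n) -(cardsC S).
by rewrite -[X in (X < _)%N]add0n ltn_add2r card_gt0.
Qed.

Definition edge_factor (u v : 'I_n) : W R := M u v / (lm - M u u).

Definition stepmx : 'M[W R]_n :=
  \matrix_(u, v) if (u \notin S) && (u != v) then edge_factor u v else 0.

Definition walkmx : 'M[W R]_n := \sum_(k < n) stepmx ^+ k.

Lemma stepmx_rowS u v : u \in S -> stepmx u v = 0.
Proof. by move=> uS; rewrite mxE uS. Qed.

Lemma stepmx_neq0 u v :
  stepmx u v != 0 -> (u \notin S) && edge_noloop M u v.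
Proof.
rewrite mxE; case: ifP => [/andP[-> uv]|_]; last by rewrite eqxx.
move=> nz_uv; rewrite /edge_noloop uv /=.
by apply: contraNneq nz_uv; rewrite /edge_factor => ->; rewrite mul0r.
Qed.

Lemma stepmx_path y t :
  path (fun a b => stepmx a b != 0) y t ->
  all (fun v => v \notin S) (belast y t) && path (edge_noloop M) y t.
Proof.
move/(sub_path (e' := fun a b => (a \notin S) && edge_noloop M a b) stepmx_neq0).
by rewrite (path_relI (fun a _ => a \notin S)) path_source.
Qed.

Lemma stepmx_path_uniq y t :
  path (fun a b => stepmx a b != 0) y t -> uniq (belast y t).
Proof.
case/lastP: t => [//|t z] /stepmx_path /andP[].
rewrite belast_rcons rcons_path => allS /andP[e_yt _].
exact: (acyclic_path_uniq acyclic_off_S allS e_yt).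
Qed.

Lemma stepmx_nilpotent : stepmx ^+ n = 0.
Proof.
apply/matrixP => u v; rewrite exp_mxE mxE big1 // => t _.
have [->|nz_ut] := eqVneq (walk_weight stepmx u t) 0; first by rewrite mulr0.
have p_ut := walk_weight_neq0_path nz_ut.
have /andP[allS _] := stepmx_path p_ut.
have sub_compl : {subset belast u t <= enum (~: S)}.
  by move=> w /(allP allS); rewrite mem_enum inE.
have := uniq_leq_size (stepmx_path_uniq p_ut) sub_compl.
by rewrite -cardE size_belast size_tuple leqNgt card_compl_lt.
Qed.

Lemma stepmx_walkmx : stepmx * walkmx = walkmx - 1.
Proof.
have : (stepmx - 1) * walkmx = -1 by rewrite -subrX1 stepmx_nilpotent sub0r.
by rewrite mulrBl mul1r => /eqP; rewrite subr_eq => /eqP ->; rewrite addrC.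
Qed.

Lemma walkmx_stepmx : walkmx * stepmx = walkmx - 1.
Proof.
suff -> : walkmx * stepmx = stepmx * walkmx by exact: stepmx_walkmx.
by apply: commr_sym; apply: commr_sum => k _; apply: commrX.
Qed.

Lemma walkmx_rowS u v : u \in S -> walkmx u v = (u == v)%:R.
Proof.
move=> uS; have := congr1 (fun A : 'M_n => A u v) stepmx_walkmx.
rewrite -mulmxE mxE big1 => [/esym/eqP|w _]; last by rewrite stepmx_rowS ?mul0r.
by rewrite !mxE subr_eq0 => /eqP.
Qed.

Definition invdiag : 'M[W R]_n :=
  diag_mx (\row_v if v \in S then 0 else (lm - M v v)^-1).

Definition diag_indS : 'M[W R]_n := diag_mx (\row_v (v \in S)%:R).

Lemma mulmx_invdiag_colS (A : 'M_n) u v : v \in S -> (A *m invdiag) u v = 0.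
Proof. by move=> vS; rewrite mul_mx_diag !mxE vS mulr0. Qed.

Lemma walkmx_invdiag_rowS u v : u \in S -> (walkmx *m invdiag) u v = 0.
Proof.
move=> uS; rewrite mul_mx_diag !mxE walkmx_rowS //.
by have [<-|] := eqVneq u v; rewrite ?uS ?mulr0 // mul0r.
Qed.

Lemma invdiag_mul : invdiag *m N = stepmx - 1 + diag_indS.
Proof.
apply/matrixP => u v; rewrite mul_diag_mx !mxE.
have [uS|uS] := boolP (u \in S); first by rewrite mul0r /= sub0r addrC subrr.
rewrite /= mul0rn addr0 /edge_factor.
have [<-|uv] := eqVneq u v; last by rewrite !mulr0n !subr0 mulrC.
by rewrite /= !mulr1n sub0r -[M u u - lm]opprB mulrN mulVf ?lam_sub_diag_neq0.
Qed.

Lemma walkmx_invdiag_mul : walkmx *m invdiag *m N = walkmx *m diag_indS - 1.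
Proof.
rewrite -mulmxA invdiag_mul !mulmxE mulrDr mulrBr mulr1 walkmx_stepmx.
by rewrite [walkmx - 1]addrC addrK addrC.
Qed.

Lemma Pw_walk x w t : Pw M (x :: w :: t) = M x w * walk_weight edge_factor w t.
Proof. by rewrite /= -(walk_weight_nth _ x). Qed.

Lemma walk_weight_stepmx w t :
  all (fun v => v \notin S) (belast w t) -> uniq (w :: t) ->
  walk_weight stepmx w t = walk_weight edge_factor w t.
Proof.
elim: t w => [//|z t IH] w /= /andP[wS allS] /andP[w_notin u_zt].
have wz : w != z by apply: contraNneq w_notin => ->; exact: mem_head.
by rewrite IH // mxE wS wz.
Qed.

Lemma Pw_inB i j w t :
  inB M S i j (i :: w :: t) -> Pw M (i :: w :: t) = M i w * walk_weight stepmx w t.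
Proof.
move=> B_iwt; have /and4P[_ _ _ allS] := B_iwt.
by rewrite Pw_walk walk_weight_stepmx // (inB_uniq_tail B_iwt).
Qed.

Lemma inB_of_walk i j w t : i \in S -> j \in S -> last w t = j ->
  M i w * walk_weight stepmx w t != 0 -> inB M S i j (i :: w :: t).
Proof.
move=> iS jS last_j nz_iwt.
have nz_wt : walk_weight stepmx w t != 0.
  by apply: contraNneq nz_iwt => ->; rewrite mulr0.
have p_wt := walk_weight_neq0_path nz_wt.
have /andP[allS pe_wt] := stepmx_path p_wt.
have u_bel := stepmx_path_uniq p_wt.
have notin_bel v : v \in S -> v \notin belast w t.
  by move=> vS; apply/negP => /(allP allS); rewrite vS.
have e_iw : edge M i w by apply: contraNneq nz_iwt => ->; rewrite mul0r.
have pe_wt' : path (edge M) w t by apply: sub_path pe_wt => a b /andP[].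
apply/and4P; split; [|exact: eqxx|exact/eqP|exact: allS].
have [eq_ij|ij] := eqVneq i j.
  apply/orP; right; apply/and4P; split => //; last exact/andP.
    by apply/eqP; rewrite /= last_j eq_ij.
  by rewrite [belast _ _]/= cons_uniq notin_bel.
apply/orP; left; apply/and3P; split => //; last exact/andP.
rewrite [w :: t]lastI last_j cons_uniq rcons_uniq mem_rcons in_cons negb_or ij.
by rewrite !notin_bel.
Qed.

Lemma inB_Pw_walk i j x w t : i \in S -> j \in S ->
  (if inB M S i j (x :: w :: t) then Pw M (x :: w :: t) else 0) =
  ((x == i) && (last w t == j))%:R * (M x w * walk_weight stepmx w t).
Proof.
move=> iS jS; case: ifPn => [B_xwt|notB].
  have /and4P[_ /eqP x_i /eqP last_j _] := B_xwt.
  rewrite /= in x_i last_j; subst x.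
  by rewrite last_j !eqxx mul1r (Pw_inB B_xwt).
have [/andP[/eqP x_i /eqP last_j]|] := boolP ((x == i) && (last w t == j)).
  rewrite mul1r; apply/esym/eqP; apply: contraNT notB; rewrite x_i.
  exact: inB_of_walk.
by rewrite mul0r.
Qed.

Lemma sum_inB_tuple i j m : i \in S -> j \in S ->
  \sum_(t : m.+2.-tuple 'I_n | inB M S i j t) Pw M t = (M *m stepmx ^+ m) i j.
Proof.
move=> iS jS; rewrite big_mkcond big_tuple_cons mxE (bigD1 i) //=.
rewrite [X in _ + X]big1 ?addr0 => [|x /negbTE x_i]; last first.
  rewrite big_tuple_cons; apply: big1 => w _; apply: big1 => t _ /=.
  by rewrite inB_Pw_walk // x_i mul0r.
rewrite big_tuple_cons; apply: eq_bigr => w _.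
rewrite exp_mxE mulr_sumr; apply: eq_bigr => t _ /=.
by rewrite inB_Pw_walk // eqxx mulrCA.
Qed.

Lemma Bsum_walkmx i j : i \in S -> j \in S -> Bsum M S i j = (M *m walkmx) i j.
Proof.
move=> iS jS; rewrite /Bsum.
rewrite -(big_mkord xpredT (fun k => \sum_(t : k.-tuple 'I_n | inB M S i j t) Pw M t)).
have no_short k : (k < 2)%N -> \sum_(t : k.-tuple 'I_n | inB M S i j t) Pw M t = 0.
  move=> k_lt2; apply: big1 => t /inB_size_gt1; rewrite size_tuple.
  by move=> /leq_ltn_trans/(_ k_lt2); rewrite ltnn.
rewrite big_nat_recl // big_nat_recl // !no_short // !add0r big_mkord.
rewrite /walkmx mulmx_sumr summxE; apply: eq_bigr => k _.
exact: sum_inB_tuple.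
Qed.



Definition inv_redA : 'M[W R]_#|~: S| :=
  - mxsub (@sidx n (~: S)) (@sidx n (~: S)) (walkmx *m invdiag).

Lemma inv_redA_mul : inv_redA *m redA N S = 1%:M.
Proof.
rewrite /inv_redA mulNmx.
change (redA N S) with (mxsub (@sidx n (~: S)) (@sidx n (~: S)) N).
rewrite mulmx_mxsub_sidx => [|a b w]; last first.
  by rewrite inE negbK => wS; rewrite mulmx_invdiag_colS ?mul0r.
rewrite walkmx_invdiag_mul mul_mx_diag; apply/matrixP => a b.
by rewrite !mxE (negbTE (sidx_compl b)) mulr0 sub0r opprK sidx_eq.
Qed.

Lemma mxreduce_add_lam : invmx (redA N S) = inv_redA ->
  mxreduce N S + lm%:M = mxsub (@sidx n S) (@sidx n S) (M *m walkmx).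
Proof.
rewrite /mxreduce => ->; rewrite /inv_redA mulmxN mulNmx opprK.
change (redC N S) with (mxsub (@sidx n S) (@sidx n (~: S)) N).
rewrite mulmx_mxsub_sidx => [|a b w]; last first.
  by rewrite inE negbK => wS; rewrite walkmx_invdiag_rowS ?mulr0.
change (redB N S) with (mxsub (@sidx n (~: S)) (@sidx n S) N).
rewrite mulmx_mxsub_sidx => [|a b w]; last first.
  by rewrite inE negbK => wS; rewrite mulmxA mulmx_invdiag_colS ?mul0r.
rewrite -mulmxA walkmx_invdiag_mul mulmxBr mulmx1 mulmxA mul_mx_diag.
rewrite mulmxBl mul_scalar_mx; apply/matrixP => a b.
have [iS jS] := (enum_valP a, enum_valP b).
rewrite !mxE walkmx_rowS // jS mulr1 mulr_natr !sidx_eq.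
by rewrite (addrC (M _ _ - _)) !subrK.
Qed.


End Reduction.

Theorem lemma3 (R : realType) (n : nat) (M : 'M[W R]_n) (S : {set 'I_n}) :
  structural M S ->
  redA (M - (lam R)%:M) S \in unitmx /\
  mxreduce (M - (lam R)%:M) S + (lam R)%:M = RS M S.
Proof.
case=> S_neq0 acyclic_off_S diag_neq_lam.
have inv_redA_A := inv_redA_mul S_neq0 acyclic_off_S diag_neq_lam.
have [_ unit_A] := mulmx1_unit inv_redA_A.
have inv_A : invmx (redA (M - (lam R)%:M) S) = inv_redA M S.
  by rewrite -[inv_redA M S]mulmx1 -(mulmxV unit_A) mulmxA inv_redA_A mul1mx.
split=> //; rewrite (mxreduce_add_lam S_neq0 acyclic_off_S diag_neq_lam inv_A).
apply/matrixP => a b; rewrite RSE mxE.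
by rewrite (Bsum_walkmx acyclic_off_S) ?enum_valP.
Qed.
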